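(* Let $n\geq 2$ and let $G\in\mathcal{G}_{2n}$. Let $M$ be a perfect matching of $G$. Then $f(G,M)=n-1$ if and only if for any two distinct edges $e_i,e_j\in M$, the induced subgraph $G[V(\{e_i,e_j\})]$ contains an $M$-alternating cycle. Consequently, $G$ has a perfect matching $M$ with $f(G,M)=n-1$ if and only if $G$ has a perfect matching $M$ with this property. Moreover, $G$ is minimal if and only if $G$ has a perfect matching $M$ such that for any two distinct edges $e_i,e_j\in M$, $G[V(\{e_i,e_j\})]$ is exactly an $M$-alternating $4$-cycle (i.e. the induced subgraph on these four vertices is a $4$-cycle alternating between $M$ and non-$M$ edges, with no further edges).
   Context: All graphs are finite and simple. $\mathcal{G}_{2n}$ denotes the set of all graphs with $2n$ vertices that have a perfect matching. For an edge set $S$, $V(S)$ is the set of end vertices of edges of $S$; $G[T]$ is the subgraph induced by a vertex set $T$. For a perfect matching $M$ of $G$, a cycle is $M$-alternating if its edges alternate between $M$ and $E(G)\setminus M$. A forcing set of $M$ is a subset $S\subseteq M$ contained in no other perfect matching of $G$; the forcing number $f(G,M)$ is the minimum size of a forcing set of $M$. The maximum forcing number $F(G)$ is the maximum of $f(G,M)$ over all perfect matchings $M$ of $G$ (so $F(G)\le n-1$ for $G\in\mathcal{G}_{2n}$). A graph $G\in\mathcal{G}_{2n}$ with $F(G)=n-1$ is called minimal if for every edge $e$ of $G$, either $G-e$ has no perfect matching or $F(G-e)\leq n-2$ (in fact the paper shows $G-e$ always has a perfect matching, so the condition is $F(G-e)\le n-2$). *)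

(* A simple graph on a finite vertex type T is given by its
   edge set E : {set {set T}}, every edge being a 2-element subset of T. *)
From mathcomp Require Import all_boot.
Set Implicit Arguments. Unset Strict Implicit. Unset Printing Implicit Defensive.

Section Graphs.
Variable T : finType.
Implicit Types (E M S : {set {set T}}) (V : {set T}).

Definition simple_graph E : bool := [forall a in E, #|a| == 2].

Definition perfect_matching E M : bool :=
  (M \subset E) && [forall x : T, #|[set a in M | x \in a]| == 1].

Definition has_perfect_matching E : bool := [exists M, perfect_matching E M].

Definition forcing_set E M S : bool :=
  (S \subset M) &&
  [forall M' : {set {set T}}, (perfect_matching E M' && (S \subset M')) ==> (M' == M)].

(* forcing number f(G,M): minimum size of a forcing set of M
   (M itself is a forcing set when M is a perfect matching, so the initial
   value #|M| of the minimum is harmless) *)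
Definition forcing_number E M : nat :=
  \big[minn/#|M|]_(S in powerset M | forcing_set E M S) #|S|.

Definition max_forcing_number E : nat :=
  \max_(M | perfect_matching E M) forcing_number E M.

Definition minimal_graph (n : nat) E : Prop :=
  has_perfect_matching E /\ max_forcing_number E = n.-1 /\
  forall a, a \in E ->
    ~~ has_perfect_matching (E :\ a) \/ max_forcing_number (E :\ a) <= n.-2.

Definition cyc_edge (x0 : T) (s : seq T) (i : nat) : {set T} :=
  [set nth x0 s i; nth x0 s (i.+1 %% size s)].

(* s = [v_0; ...; v_{k-1}] is an M-alternating cycle of the graph E:
   distinct vertices, k >= 4 even, consecutive vertices (cyclically) adjacent,
   and the edge v_i v_{i+1} is in M exactly when i is even *)
Definition alt_cycle E M (s : seq T) : Prop :=
  match s with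
  | [::] => False
  | x0 :: _ =>
      uniq s /\ 4 <= size s /\ ~~ odd (size s) /\
      forall i, i < size s ->
        cyc_edge x0 s i \in E /\ ((cyc_edge x0 s i \in M) = ~~ odd i)
  end.

Definition induced_edges E V : {set {set T}} := [set a in E | a \subset V].

Definition has_alt_cycle_in E M V : Prop :=
  exists s, alt_cycle (induced_edges E V) M s.

Definition is_alt_4cycle E M V : Prop :=
  exists a b c d : T,
    alt_cycle (induced_edges E V) M [:: a; b; c; d] /\
    induced_edges E V =
      [set a; b] |: ([set b; c] |: ([set c; d] |: [set ([set d; a] : {set T})])).

End Graphs.

From mathcomp Require Import all_boot zify.
From Stdlib Require Import Classical.
Set Implicit Arguments. Unset Strict Implicit. Unset Printing Implicit Defensive.

(* A perfect matching M of a simple graph is a partition of the vertex set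
   into edges, so the M-edge containing a vertex x is [pblock M x].  Two
   distinct M-edges ei = {a,b}, ej = {c,d} are *linked* when bc and da are
   edges; in G[ei u ej] this is the same as having an M-alternating cycle,
   which can only be the 4-cycle a-b-c-d.  With |M| = n:
   - M :\ e is always forcing, so f(G,M) <= n-1;
   - if ei, ej are not linked, M :\: {ei,ej} is forcing, so f(G,M) <= n-2;
   - if ei, ej are linked, swapping them for bc, da gives a second perfect
     matching, so a forcing set meets {ei,ej}; if all pairs are linked every
     forcing set misses at most one M-edge and f(G,M) = n-1.
   For minimality: a chord of some G[ei u ej] can be deleted without losing
   any alternating cycle, so a minimal graph has exact alternating 4-cycles.
   Conversely, if all pairs span exact 4-cycles every vertex has degree at
   most n, while after deleting an edge a matching with f = n-1 would force
   every vertex to keep degree at least n. *)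

Section ForcingPairs.
Variable T : finType.
Implicit Types (E M S A B : {set {set T}}) (e g h : {set T}).

Lemma edge_card E g : simple_graph E -> g \in E -> #|g| = 2.
Proof. by move=> /forallP /(_ g) /implyP H /H /eqP. Qed.

Lemma edge_at E g (x : T) : simple_graph E -> g \in E -> x \in g ->
  exists2 y, y != x & g = [set x; y].
Proof.
move=> sg gE; have /cards2P [u [v [uv ->]]] : #|g| == 2 by rewrite (edge_card sg gE).
rewrite !inE => /orP[] /eqP ->; first by exists v; rewrite // eq_sym.
by exists u; rewrite // setUC.
Qed.

Lemma edge_eq E g h : simple_graph E -> g \in E -> h \in E -> g \subset h -> g = h.
Proof.
by move=> sg gE hE gh; apply/eqP; rewrite eqEcard gh (edge_card sg gE) (edge_card sg hE).
Qed.

Lemma set2_other (x y w : T) : y \in [set x; w] -> y != x -> y = w.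
Proof. by rewrite !inE => /orP [] /eqP -> //; rewrite eqxx. Qed.

Lemma card2_set2 e (u v : T) : #|e| = 2 -> u != v -> u \in e -> v \in e -> e = [set u; v].
Proof.
move=> e2 uv ue ve; apply/esym/eqP; rewrite eqEcard subUset !sub1set ue ve e2.
by rewrite cards2 uv.
Qed.

Lemma cover2 e1 e2 : cover [set e1; e2] = e1 :|: e2.
Proof. by rewrite /cover bigcup_setU !big_set1. Qed.

Lemma trivIset2 e1 e2 : [disjoint e1 & e2] -> trivIset [set e1; e2].
Proof.
move=> dis; apply/trivIsetP => A1 A2; rewrite !inE.
by case/orP => /eqP -> /orP [] /eqP ->; rewrite ?eqxx // disjoint_sym.
Qed.

Lemma uniq4_disjoint (a b c d : T) :
  uniq [:: a; b; c; d] -> [disjoint [set b; c] & [set d; a]].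
Proof.
rewrite /= !inE !negb_or => /and4P [/and3P [ab ac ad] /andP [bc bd] cd _].
apply/pred0P => x /=; rewrite !inE; apply/negbTE/negP.
by case/andP => /orP [] /eqP -> /orP [] /eqP E; move: ab ac ad bc bd cd; rewrite E eqxx.
Qed.

Lemma simple_graphD1 E g : simple_graph E -> simple_graph (E :\ g).
Proof.
move=> /forallP sg; apply/forallP => a; apply/implyP => /setD1P [_ aE].
exact: (implyP (sg a) aE).
Qed.

Lemma perfect_matchingP E M :
  reflect [/\ M \subset E, cover M = [set: T] & trivIset M] (perfect_matching E M).
Proof.
apply: (iffP andP) => [[sME /forallP one] | [sME covM triv]]; split => //.
- apply/setP => x; rewrite inE; have /cards1P [e Ex] := one x.
  have : e \in [set a in M | x \in a] by rewrite Ex set11.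
  by rewrite inE => /andP [eM xe]; apply/bigcupP; exists e.
- apply/trivIsetP => e1 e2 e1M e2M ne; apply/pred0P => x /=; apply/negbTE/negP.
  move=> /andP [x1 x2]; have /cards1P [e Ex] := one x; move/eqP: ne; apply.
  have : e1 \in [set a in M | x \in a] by rewrite inE e1M.
  have : e2 \in [set a in M | x \in a] by rewrite inE e2M.
  by rewrite Ex !inE => /eqP -> /eqP ->.
- apply/forallP => x; apply/cards1P; exists (pblock M x); apply/setP => e.
  have xM : x \in cover M by rewrite covM inE.
  rewrite !inE; apply/andP/eqP => [[eM xe] | ->]; first exact/esym/def_pblock.
  by rewrite pblock_mem // mem_pblock.
Qed.

Lemma perfect_matchingD1 E M g : perfect_matching E M -> g \notin M ->
  perfect_matching (E :\ g) M.
Proof.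
case/perfect_matchingP => sME covM triv gM; apply/perfect_matchingP; split => //.
apply/subsetP => h hM; rewrite !inE (subsetP sME _ hM) andbT.
by apply: contraNneq gM => <-.
Qed.

Section PerfectMatching.
Variables (E M : {set {set T}}).
Hypotheses (sg : simple_graph E) (pm : perfect_matching E M).

Lemma matching_sub : M \subset E. Proof. by case/perfect_matchingP: pm. Qed.
Lemma matching_triv : trivIset M. Proof. by case/perfect_matchingP: pm. Qed.

Lemma mate_mem (x : T) : pblock M x \in M.
Proof. by case/perfect_matchingP: pm => _ covM _; rewrite pblock_mem // covM inE. Qed.

Lemma mem_mate (x : T) : x \in pblock M x.
Proof. by case/perfect_matchingP: pm => _ covM _; rewrite mem_pblock covM inE. Qed.

Lemma mateE e (x : T) : e \in M -> x \in e -> pblock M x = e.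
Proof. exact: def_pblock matching_triv. Qed.

Lemma matching_edge e : e \in M -> e \in E.
Proof. exact: (subsetP matching_sub). Qed.

Lemma matching_card e : e \in M -> #|e| = 2.
Proof. by move/matching_edge; apply: edge_card. Qed.

Lemma card_matching : #|T| = 2 * #|M|.
Proof.
have part : partition M [set: T].
  case/perfect_matchingP: pm => _ covM triv; rewrite /partition covM eqxx triv.
  by apply/negP => /matching_card; rewrite cards0.
rewrite -cardsT (card_partition part) (eq_bigr (fun _ => 2)) ?sum_nat_const 1?mulnC //.
exact: matching_card.
Qed.

Lemma matching_maximal M' : perfect_matching E M' -> M \subset M' -> M' = M.
Proof.
case/perfect_matchingP => sM'E _ triv' sMM'; apply/eqP; rewrite eqEsubset sMM' andbT.
apply/subsetP => g gM'; have /card_gt0P [x xg] : 0 < #|g|.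
  by rewrite (edge_card sg (subsetP sM'E _ gM')).
have mateM' : pblock M x \in M' by rewrite (subsetP sMM') ?mate_mem.
by rewrite -(def_pblock triv' gM' xg) (def_pblock triv' mateM' (mem_mate x)) mate_mem.
Qed.

Lemma matching_disjoint e1 e2 (x : T) :
  e1 \in M -> e2 \in M -> e1 != e2 -> x \in e1 -> x \notin e2.
Proof.
move=> e1M e2M ne xe1; apply: contra ne => xe2.
by rewrite -(mateE e1M xe1) (mateE e2M xe2).
Qed.

Lemma matching_cross e (x y : T) : e \in M -> x \in e -> y \notin e -> [set x; y] \notin M.
Proof.
move=> eM xe ye; apply: contra ye => xyM.
by rewrite -(mateE eM xe) (mateE xyM (setU11 x _)) !inE eqxx orbT.
Qed.

Lemma matching_edge_in_pair ei ej e (x : T) : ei \in M -> ej \in M -> e \in M ->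
  x \in e -> x \in ei :|: ej -> e = ei \/ e = ej.
Proof.
move=> eiM ejM eM xe; rewrite inE => /orP [] xe'; rewrite -(mateE eM xe).
  by left; apply: mateE.
by right; apply: mateE.
Qed.

Lemma pair_uniq (a b c d : T) : [set a; b] \in M -> [set c; d] \in M ->
  [set a; b] != [set c; d] -> uniq [:: a; b; c; d].
Proof.
move=> abM cdM ne.
have ab : a != b by move: (matching_card abM); rewrite cards2; case: (a != b).
have cd : c != d by move: (matching_card cdM); rewrite cards2; case: (c != d).
have := matching_disjoint abM cdM ne (setU11 a _).
have := matching_disjoint abM cdM ne (_ : b \in [set a; b]); rewrite !inE eqxx orbT.
by rewrite /= !inE !negb_or ab cd => /(_ isT) /andP [-> ->] /andP [-> ->].
Qed.

End PerfectMatching.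

Lemma forcing_setP E M S :
  reflect (S \subset M /\ forall M', perfect_matching E M' -> S \subset M' -> M' = M)
          (forcing_set E M S).
Proof.
apply: (iffP andP) => [[SM /forallP uniqS] | [SM uniqS]]; split => //.
  by move=> M' pm' SM'; apply/eqP/(implyP (uniqS M')); rewrite pm' SM'.
by apply/forallP => M'; apply/implyP => /andP [pm' SM']; apply/eqP/uniqS.
Qed.

Lemma bigmin_le (I : eqType) (r : seq I) (P : pred I) (F : I -> nat) x i :
  i \in r -> P i -> \big[minn/x]_(j <- r | P j) F j <= F i.
Proof.
move=> ir Pi; elim: r ir => // j r IH; rewrite inE big_cons => /orP [/eqP <- | /IH le].
  by rewrite Pi geq_minl.
by case: (P j) => //; rewrite geq_min le orbT.
Qed.

Lemma forcing_number_le E M S : forcing_set E M S -> forcing_number E M <= #|S|.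
Proof.
move=> fS; apply: bigmin_le; first exact: mem_index_enum.
by rewrite powersetE fS andbT; case/andP: fS.
Qed.

Lemma forcing_number_ge E M k : k <= #|M| ->
  (forall S, forcing_set E M S -> k <= #|S|) -> k <= forcing_number E M.
Proof.
move=> kM kS; apply: (big_ind (fun m => k <= m)) => // [m1 m2 | S /andP [_ fS]].
  by rewrite leq_min => -> ->.
exact: kS.
Qed.

Definition linked E e1 e2 : Prop :=
  exists a b c d : T,
    [/\ e1 = [set a; b], e2 = [set c; d], [set b; c] \in E & [set d; a] \in E].

Lemma linked_sym E e1 e2 : linked E e1 e2 -> linked E e2 e1.
Proof. by case=> [a [b [c [d [-> -> bc da]]]]]; exists c, d, a, b. Qed.

Definition pairs_linked E M : Prop :=
  forall ei ej, ei \in M -> ej \in M -> ei != ej -> linked E ei ej.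

Section Forcing.
Variables (E M : {set {set T}}).
Hypotheses (sg : simple_graph E) (pm : perfect_matching E M).

Lemma matching_stays_inside A M' g (x : T) : A \subset M -> perfect_matching E M' ->
  M :\: A \subset M' -> g \in M' -> x \in g -> x \in cover A -> g \subset cover A.
Proof.
move=> sAM /perfect_matchingP [_ _ triv'] sM' gM' xg /bigcupP [e eA xe].
apply/subsetP => y yg; case: (boolP (pblock M y \in A)) => [yA | nyA].
  by apply/bigcupP; exists (pblock M y); rewrite ?(mem_mate pm).
have yM' : pblock M y \in M' by rewrite (subsetP sM') // inE nyA (mate_mem pm).
have gE : g = pblock M y.
  by rewrite -(def_pblock triv' gM' yg) (def_pblock triv' yM' (mem_mate pm y)).
have gM : g \in M by rewrite gE (mate_mem pm).
by move: nyA; rewrite -gE -(mateE pm gM xg) (mateE pm (subsetP sAM _ eA) xe) eA.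
Qed.

Lemma matching_swap A B : A \subset M -> B \subset E -> cover B = cover A -> trivIset B ->
  perfect_matching E ((M :\: A) :|: B).
Proof.
case/perfect_matchingP: pm => sME covM triv sAM sBE covB trivB.
apply/perfect_matchingP; split.
- by rewrite subUset sBE andbT (subset_trans (subsetDl M A) sME).
- have splitM : M = (M :\: A) :|: A.
    apply/setP => e; rewrite !inE.
    by case: (boolP (e \in A)) => [/(subsetP sAM) -> | _]; rewrite ?orbT ?orbF.
  by rewrite -covM [in RHS]splitM /cover !bigcup_setU -/(cover B) covB.
- apply: trivIsetU (trivIsetD _ triv) trivB _; rewrite covB -setI_eq0.
  apply/eqP/setP => x; rewrite !inE; apply/negP.
  move=> /andP [/bigcupP [h /setDP [hM hA] xh] /bigcupP [e eA xe]].
  by move: hA; rewrite -(mateE pm hM xh) (mateE pm (subsetP sAM _ eA) xe) eA.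
Qed.

Lemma one_edge_forces e : e \in M -> forcing_set E M (M :\ e).
Proof.
move=> eM; apply/forcing_setP; split => [|M' pm' sM']; first exact: subsetDl.
have /card_gt0P [x xe] : 0 < #|e| by rewrite (matching_card sg pm eM).
have inside : pblock M' x \subset e.
  have := @matching_stays_inside [set e] M' (pblock M' x) x.
  by rewrite cover1 sub1set; apply => //; rewrite ?(mate_mem pm') ?(mem_mate pm').
have eM' : e \in M'.
  by rewrite -(edge_eq sg (matching_edge pm' (mate_mem pm' x)) (matching_edge pm eM) inside)
             (mate_mem pm').
apply: (matching_maximal sg pm pm'); apply/subsetP => h hM.
by case: (eqVneq h e) => [-> // | ne]; apply: (subsetP sM'); rewrite !inE ne.
Qed.

Lemma forcing_number_le_pred : 0 < #|M| -> forcing_number E M <= #|M|.-1.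
Proof.
case/card_gt0P => e eM; apply: leq_trans (forcing_number_le (one_edge_forces eM)) _.
by rewrite [in X in _ <= X.-1](cardsD1 e M) eM.
Qed.

(* If another perfect matching contains M :\: {ei,ej} but not ei, then the
   partners of the ends of ei link ei to ej. *)
Lemma unmatched_linked ei ej M' : ei \in M -> ej \in M -> ei != ej ->
  perfect_matching E M' -> M :\: [set ei; ej] \subset M' -> ei \notin M' ->
  linked E ei ej.
Proof.
move=> eiM ejM nij pm' sM' eiM'.
have sAM : [set ei; ej] \subset M by rewrite subUset !sub1set eiM ejM.
have partner x : x \in ei -> exists2 y, y \in ej & pblock M' x = [set x; y].
  move=> xi; have gE := matching_edge pm' (mate_mem pm' x).
  have [y yx xyE] := edge_at sg gE (mem_mate pm' x); exists y => //.
  have : pblock M' x \subset ei :|: ej.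
    have := @matching_stays_inside [set ei; ej] M' (pblock M' x) x.
    by rewrite cover2 inE xi; apply => //; rewrite ?(mate_mem pm') ?(mem_mate pm').
  rewrite xyE subUset !sub1set !inE => /andP [_ /orP [yi | //]].
  have xyi : [set x; y] = ei.
    by apply: (edge_eq sg _ (matching_edge pm eiM)); rewrite ?subUset ?sub1set ?xi ?yi // -xyE.
  by move: eiM'; rewrite -xyi -xyE (mate_mem pm').
have /cards2P [a [b [ab eiE]]] : #|ei| == 2 by rewrite (matching_card sg pm eiM).
have ai : a \in ei by rewrite eiE setU11.
have bi : b \in ei by rewrite eiE !inE eqxx orbT.
have [z zj aE] := partner a ai.
have [w wj bE] := partner b bi.
have wz : w != z.
  apply/eqP => wzE; have triv' : trivIset M' by case/perfect_matchingP: pm'.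
  have zb : z \in pblock M' b by rewrite bE wzE !inE eqxx orbT.
  have za : z \in pblock M' a by rewrite aE !inE eqxx orbT.
  have : b \in [set a; z].
    by rewrite -aE -(same_pblock triv' za) (same_pblock triv' zb) (mem_mate pm').
  move/set2_other; rewrite eq_sym ab => /(_ isT) bz.
  by move: (matching_disjoint pm eiM ejM nij bi); rewrite bz zj.
exists a, b, w, z; split => //.
- exact: card2_set2 (matching_card sg pm ejM) wz wj zj.
- by rewrite -bE (matching_edge pm' (mate_mem pm' b)).
- by rewrite setUC -aE (matching_edge pm' (mate_mem pm' a)).
Qed.

Lemma linking_edges_notin ei ej (a b c d : T) : ei \in M -> ej \in M -> ei != ej ->
  ei = [set a; b] -> ej = [set c; d] -> [set b; c] \notin M /\ [set d; a] \notin M.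
Proof.
move=> eiM ejM nij eiE ejE.
have outside y : y \in ej -> y \notin ei by apply: (matching_disjoint pm ejM eiM); rewrite eq_sym.
split; last rewrite setUC.
  apply: (matching_cross pm eiM); first by rewrite eiE !inE eqxx orbT.
  by apply: outside; rewrite ejE setU11.
apply: (matching_cross pm eiM); first by rewrite eiE setU11.
by apply: outside; rewrite ejE !inE eqxx orbT.
Qed.

Lemma unlinked_pair_forces ei ej : ei \in M -> ej \in M -> ei != ej ->
  ~ linked E ei ej -> forcing_set E M (M :\: [set ei; ej]).
Proof.
move=> eiM ejM nij unlinked; apply/forcing_setP; split => [|M' pm' sM'].
  exact: subsetDl.
have eiM' : ei \in M'.
  by apply: contraT => eiM'; case: unlinked; apply: unmatched_linked sM' eiM'.
have ejM' : ej \in M'.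
  apply: contraT => ejM'; case: unlinked; apply: linked_sym.
  by apply: unmatched_linked ejM' => //; rewrite 1?eq_sym // setUC.
apply: (matching_maximal sg pm pm'); apply/subsetP => h hM.
case: (boolP (h \in [set ei; ej])) => [| hA]; first by rewrite !inE => /orP [] /eqP ->.
by apply: (subsetP sM'); rewrite inE hA.
Qed.

(* If ei, ej are linked, a set missing both cannot force M: swap them for
   bc and da. *)
Lemma linked_pair_not_forcing ei ej S : ei \in M -> ej \in M -> ei != ej ->
  linked E ei ej -> ei \notin S -> ej \notin S -> ~~ forcing_set E M S.
Proof.
move=> eiM ejM nij [a [b [c [d [eiE ejE bcE daE]]]]] eiS ejS.
have U : uniq [:: a; b; c; d] by apply: (pair_uniq sg pm); rewrite -?eiE -?ejE.
set B := [set [set b; c]; [set d; a]].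
have pmB : perfect_matching E ((M :\: [set ei; ej]) :|: B).
  apply: matching_swap.
  - by rewrite subUset !sub1set eiM ejM.
  - by rewrite subUset !sub1set bcE daE.
  - rewrite !cover2 eiE ejE; apply/setP => x; rewrite !inE.
    by case: (x == a); case: (x == b); case: (x == c); case: (x == d).
  - exact/trivIset2/uniq4_disjoint.
apply/negP => /forcing_setP [SM uniqS].
have SM' : S \subset (M :\: [set ei; ej]) :|: B.
  apply/subsetP => h hS; rewrite !inE (subsetP SM _ hS) andbT.
  by apply/orP; left; apply: contraTN hS => /orP [] /eqP ->.
have : ei \in (M :\: [set ei; ej]) :|: B by rewrite (uniqS _ pmB SM').
have [bcM daM] := linking_edges_notin eiM ejM nij eiE ejE.
by rewrite /B !inE eqxx /= => /orP [] /eqP eiB; move: eiM; rewrite eiB ?(negbTE bcM) ?(negbTE daM).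
Qed.

Lemma forcing_number_pairs n : #|M| = n -> 2 <= n ->
  forcing_number E M = n.-1 <-> pairs_linked E M.
Proof.
move=> cM n2; have upper : forcing_number E M <= n.-1.
  by rewrite -cM forcing_number_le_pred // cM; lia.
split => [fE ei ej eiM ejM nij | linkedM].
  apply: NNPP => unlinked.
  have := forcing_number_le (unlinked_pair_forces eiM ejM nij unlinked).
  rewrite cardsD (setIidPr _) ?subUset ?sub1set ?eiM ?ejM // cards2 nij cM fE; lia.
apply/eqP; rewrite eqn_leq upper /=; apply: forcing_number_ge; first by rewrite cM; lia.
move=> S fS; rewrite leqNgt; apply/negP => small; have /forcing_setP [SM _] := fS.
have : 1 < #|M :\: S| by rewrite cardsD (setIidPr SM) cM; lia.
case/card_gt1P => ei [ej [/setDP [eiM eiS] /setDP [ejM ejS] nij]].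
by move: fS; apply/negP; apply: linked_pair_not_forcing (linkedM _ _ eiM ejM nij) eiS ejS.
Qed.

End Forcing.

Definition alt_square E M (a b c d : T) : Prop :=
  [/\ uniq [:: a; b; c; d],
      [&& [set a; b] \in E, [set b; c] \in E, [set c; d] \in E & [set d; a] \in E],
      [set a; b] \in M /\ [set c; d] \in M &
      [set b; c] \notin M /\ [set d; a] \notin M].

Lemma alt_cycle4P E M (a b c d : T) :
  alt_cycle E M [:: a; b; c; d] <-> alt_square E M a b c d.
Proof.
rewrite /alt_cycle /alt_square /cyc_edge /=; split.
  case=> U [_ [_ H]].
  move: (H 0 isT) (H 1 isT) (H 2 isT) (H 3 isT) => /= [ab abM] [bc bcM] [cd cdM] [da daM].
  by split; rewrite ?ab ?bc ?cd ?da ?abM ?bcM ?cdM ?daM.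
case=> U /and4P [ab bc cd da] [abM cdM] [bcM daM]; do 3 split => //.
by case=> [|[|[|[|i]]]] // _; rewrite ?ab ?bc ?cd ?da ?abM ?cdM ?(negbTE bcM) ?(negbTE daM).
Qed.

Definition pairs_alternating E M : Prop :=
  forall ei ej, ei \in M -> ej \in M -> ei != ej -> has_alt_cycle_in E M (ei :|: ej).

Section AlternatingCycles.
Variables (E M : {set {set T}}).
Hypotheses (sg : simple_graph E) (pm : perfect_matching E M).

Lemma linked_alt_cycle ei ej (a b c d : T) : ei \in M -> ej \in M -> ei != ej ->
  ei = [set a; b] -> ej = [set c; d] -> [set b; c] \in E -> [set d; a] \in E ->
  alt_cycle (induced_edges E (ei :|: ej)) M [:: a; b; c; d].
Proof.
move=> eiM ejM nij eiE ejE bcE daE; apply/alt_cycle4P.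
have [bcM daM] := linking_edges_notin pm eiM ejM nij eiE ejE.
split => //; first by apply: (pair_uniq sg pm); rewrite -?eiE -?ejE.
  rewrite !inE -eiE -ejE (matching_edge pm eiM) (matching_edge pm ejM) bcE daE.
  by rewrite subsetUl subsetUr eiE ejE !subUset !sub1set !inE !eqxx !orbT.
by rewrite -eiE -ejE.
Qed.

(* An alternating cycle in G[ei u ej] has exactly four vertices and links
   ei to ej. *)
Lemma alt_cycle_linked ei ej s : ei \in M -> ej \in M -> ei != ej ->
  alt_cycle (induced_edges E (ei :|: ej)) M s -> linked E ei ej.
Proof.
move=> eiM ejM nij; case: s => [|a s] // cyc; have [U [size4 [_ edges]]] := cyc.
have inV x : x \in a :: s -> x \in ei :|: ej.
  move=> /(nthP a) [i lt <-]; have [Ei _] := edges i lt.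
  by move: Ei; rewrite inE => /andP [_ /subsetP]; apply; rewrite /cyc_edge setU11.
have small : size (a :: s) <= 4.
  apply: leq_trans (uniq_leq_size (s2 := enum (ei :|: ej)) U _) _.
    by move=> x /inV; rewrite mem_enum.
  rewrite -cardE (leq_trans (leq_card_setU ei ej)) //.
  by rewrite (matching_card sg pm eiM) (matching_card sg pm ejM).
case: s U size4 edges inV small cyc => [|b [|c [|d [|? ?]]]] //= _ _ _ inV _.
move=> /alt_cycle4P [U /and4P [_ bcI _ daI] [abM cdM] _].
move: bcI daI; rewrite !inE => /andP [bcE _] /andP [daE _].
have acd : a \notin [set c; d].
  by move: U; rewrite /= !inE !negb_or => /and4P [/and3P [_ -> ->] _ _ _].
have ne : [set a; b] != [set c; d] by apply: contraNneq acd => <-; apply: setU11.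
have lk : linked E [set a; b] [set c; d] by exists a, b, c, d.
have ci : c \in [:: a; b; c; d] by rewrite !inE eqxx !orbT.
have [abE | abE] := matching_edge_in_pair pm eiM ejM abM (setU11 _ _) (inV a (mem_head _ _));
have [cdE | cdE] := matching_edge_in_pair pm eiM ejM cdM (setU11 _ _) (inV c ci);
  rewrite abE cdE ?eqxx // in ne lk; exact: linked_sym.
Qed.

Lemma alternating_linked ei ej : ei \in M -> ej \in M -> ei != ej ->
  has_alt_cycle_in E M (ei :|: ej) <-> linked E ei ej.
Proof.
move=> eiM ejM nij; split => [[s] | [a [b [c [d [eiE ejE bcE daE]]]]]].
  exact: alt_cycle_linked.
by exists [:: a; b; c; d]; apply: linked_alt_cycle.
Qed.

Lemma forcing_number_alternating n : #|T| = 2 * n -> 2 <= n ->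
  forcing_number E M = n.-1 <-> pairs_alternating E M.
Proof.
move=> cT n2; rewrite (forcing_number_pairs sg pm _ n2); last by have := card_matching sg pm; lia.
by split => H ei ej eiM ejM nij; apply/(alternating_linked eiM ejM nij); apply: H.
Qed.

End AlternatingCycles.

Definition nbhd E (x : T) : {set T} := [set y | [set x; y] \in E].

Lemma linked_nbhd E ei ej (x : T) : linked E ei ej -> x \in ei ->
  exists2 y, y \in ej & y \in nbhd E x.
Proof.
case=> [a [b [c [d [-> -> bcE daE]]]]]; rewrite !inE => /orP [] /eqP ->.
  by exists d; rewrite !inE ?eqxx ?orbT // setUC.
by exists c; rewrite !inE ?eqxx.
Qed.

Lemma nbhd_delete E g (u : T) : simple_graph E -> g \in E -> u \in g ->
  nbhd (E :\ g) u \proper nbhd E u.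
Proof.
move=> sg gE ug; have [v _ gv] := edge_at sg gE ug.
apply/properP; split; first by apply/subsetP => y; rewrite !inE => /andP [].
by exists v; rewrite !inE -gv ?gE ?eqxx.
Qed.

Lemma nbhd_not_self E (x : T) : simple_graph E -> x \notin nbhd E x.
Proof. by move=> sg; apply/negP; rewrite inE setUid => /(edge_card sg); rewrite cards1. Qed.

Definition pairs_exact E M : Prop :=
  forall ei ej, ei \in M -> ej \in M -> ei != ej -> is_alt_4cycle E M (ei :|: ej).

Section Degrees.
Variables (E M : {set {set T}}).
Hypotheses (sg : simple_graph E) (pm : perfect_matching E M).

(* If all pairs are linked, x has a neighbour in every M-edge, so deg x >= |M|. *)
Lemma nbhd_lower (x : T) : pairs_linked E M -> #|M| <= #|nbhd E x|.
Proof.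
move=> lk; apply: leq_trans (leq_imset_card (pblock M) (nbhd E x)).
apply/subset_leq_card/subsetP => e eM; apply/imsetP.
case: (eqVneq e (pblock M x)) => [-> | ne].
  have [y _ xyE] := edge_at sg (matching_edge pm (mate_mem pm x)) (mem_mate pm x).
  exists y; first by rewrite inE -xyE (matching_edge pm (mate_mem pm x)).
  by rewrite (mateE pm (mate_mem pm x)) // xyE !inE eqxx orbT.
have ne' : pblock M x != e by rewrite eq_sym.
have [y ye yN] := linked_nbhd (lk _ _ (mate_mem pm x) eM ne') (mem_mate pm x).
by exists y => //; rewrite (mateE pm eM ye).
Qed.

Lemma exact_unique_neighbour ei ej (x y1 y2 : T) : ei \in M -> ej \in M -> ei != ej ->
  is_alt_4cycle E M (ei :|: ej) -> x \in ei -> y1 \in ej -> y2 \in ej ->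
  y1 \in nbhd E x -> y2 \in nbhd E x -> y1 = y2.
Proof.
move=> eiM ejM nij [a [b [c [d [/alt_cycle4P [U _ [abM cdM] _] indE]]]]] xi y1j y2j y1N y2N.
have nji : ej != ei by rewrite eq_sym.
have cross y : y \in ej -> y \in nbhd E x ->
    [set x; y] = [set b; c] \/ [set x; y] = [set d; a].
  move=> yj yN; have xyM : [set x; y] \notin M.
    by apply: (matching_cross pm eiM xi); apply: (matching_disjoint pm ejM eiM nji yj).
  have : [set x; y] \in induced_edges E (ei :|: ej).
    by move: yN; rewrite !inE => ->; rewrite subUset !sub1set !inE xi yj orbT.
  rewrite indE !inE => /or4P [] /eqP xyE; [| by left | | by right];
    by move: xyM; rewrite xyE ?abM ?cdM.
have same y y' : y \in ej -> [set x; y] = [set x; y'] -> y = y'.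
  move=> yj xyE; apply: (@set2_other x); first by rewrite -xyE !inE eqxx orbT.
  by apply: contraTneq xi => <-; apply: (matching_disjoint pm ejM eiM nji yj).
have xin (y : T) h : [set x; y] = h -> x \in h by move <-; apply: setU11.
case: (cross y1 y1j y1N) (cross y2 y2j y2N) => E1 [] E2.
- by apply: same y1j _; rewrite E1 E2.
- by move: (disjointFr (uniq4_disjoint U) (xin _ _ E1)); rewrite (xin _ _ E2).
- by move: (disjointFr (uniq4_disjoint U) (xin _ _ E2)); rewrite (xin _ _ E1).
- by apply: same y1j _; rewrite E1 E2.
Qed.

(* If all pairs are exact, x has at most one neighbour in every M-edge, so
   deg x <= |M|. *)
Lemma nbhd_upper (x : T) : pairs_exact E M -> #|nbhd E x| <= #|M|.
Proof.
move=> ex; have inj : {in nbhd E x &, injective (pblock M)}.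
  move=> y1 y2 y1N y2N same; have y2in : y2 \in pblock M y1 by rewrite same (mem_mate pm).
  case: (eqVneq (pblock M x) (pblock M y1)) => [mx | ne]; last first.
    exact: exact_unique_neighbour (mate_mem pm x) (mate_mem pm y1) ne
      (ex _ _ (mate_mem pm x) (mate_mem pm y1) ne) (mem_mate pm x) (mem_mate pm y1) y2in y1N y2N.
  have [w _ xw] := edge_at sg (matching_edge pm (mate_mem pm x)) (mem_mate pm x).
  have other y : y \in nbhd E x -> y \in pblock M x -> y = w.
    move=> yN; rewrite xw => /set2_other; apply; apply/eqP => yx.
    by move: yN; rewrite yx (negbTE (nbhd_not_self x sg)).
  have y1x : y1 \in pblock M x by rewrite mx (mem_mate pm).
  have y2x : y2 \in pblock M x by rewrite mx.
  by rewrite (other y1 y1N y1x) (other y2 y2N y2x).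
rewrite -(card_in_imset inj); apply/subset_leq_card/subsetP => e /imsetP [y _ ->].
exact: (mate_mem pm).
Qed.

End Degrees.


Section Chords.
Variables (E M : {set {set T}}).
Hypotheses (sg : simple_graph E) (pm : perfect_matching E M).

Lemma chord_span g (u v : T) ek el : g \in E -> g \notin M -> g = [set u; v] ->
  ek \in M -> el \in M -> g \subset ek :|: el -> ek :|: el = pblock M u :|: pblock M v.
Proof.
move=> gE gM guv ekM elM; rewrite guv subUset !sub1set !inE => /andP [].
have inside e : e \in M -> u \in e -> v \in e -> False.
  move=> eM ue ve; move: gM; rewrite (edge_eq sg gE (matching_edge pm eM)) ?eM //.
  by rewrite guv subUset !sub1set ue ve.
move=> /orP [] ue /orP [] ve.
- by case: (inside ek).
- by rewrite (mateE pm ekM ue) (mateE pm elM ve).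
- by rewrite (mateE pm elM ue) (mateE pm ekM ve) setUC.
- by case: (inside el).
Qed.

(* Deleting a chord of G[ei u ej] that avoids an alternating cycle there
   keeps every pair alternating: other pairs do not see the chord. *)
Lemma alternating_delete_chord g ei ej : pairs_alternating E M -> ei \in M -> ej \in M ->
  g \in E -> g \notin M -> g \subset ei :|: ej ->
  has_alt_cycle_in (E :\ g) M (ei :|: ej) -> pairs_alternating (E :\ g) M.
Proof.
move=> alt eiM ejM gE gM gV altg ek el ekM elM nkl.
have /card_gt0P [u ug] : 0 < #|g| by rewrite (edge_card sg gE).
have [v _ guv] := edge_at sg gE ug.
case: (boolP (g \subset ek :|: el)) => gkl.
  by rewrite (chord_span gE gM guv ekM elM gkl) -(chord_span gE gM guv eiM ejM gV).
have [s cyc] := alt ek el ekM elM nkl; exists s.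
suff -> : induced_edges (E :\ g) (ek :|: el) = induced_edges E (ek :|: el) by [].
apply/setP => h; rewrite !inE; case: eqP => [-> | _] //=.
by rewrite (negbTE gkl) andbF.
Qed.

End Chords.

Lemma max_forcing_attained E : has_perfect_matching E ->
  exists2 M, perfect_matching E M & max_forcing_number E = forcing_number E M.
Proof.
case/existsP => M0 pm0.
have [|M pmM maxE] := @eq_bigmax_cond _ (perfect_matching E) (forcing_number E).
  by apply/card_gt0P; exists M0.
by exists M.
Qed.

Section Minimality.
Variables (n : nat) (E : {set {set T}}).
Hypotheses (n2 : 2 <= n) (cT : #|T| = 2 * n) (sg : simple_graph E).

Lemma forcing_number_bound E' M : simple_graph E' -> perfect_matching E' M ->
  forcing_number E' M <= n.-1.
Proof.
move=> sg' pm; have cM : #|M| = n by have := card_matching sg' pm; lia.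
by rewrite -cM forcing_number_le_pred // cM; lia.
Qed.

Lemma minimal_chord_free M g ei ej : minimal_graph n E -> perfect_matching E M ->
  pairs_alternating E M -> ei \in M -> ej \in M -> g \in E -> g \notin M ->
  g \subset ei :|: ej -> has_alt_cycle_in (E :\ g) M (ei :|: ej) -> False.
Proof.
move=> [_ [_ minE]] pm alt eiM ejM gE gM gV altg.
have pm' := perfect_matchingD1 pm gM.
have alt' := alternating_delete_chord sg pm alt eiM ejM gE gM gV altg.
have f' := (forcing_number_alternating (simple_graphD1 g sg) pm' cT n2).2 alt'.
have : forcing_number (E :\ g) M <= max_forcing_number (E :\ g) by apply: leq_bigmax_cond.
case: (minE g gE) => [/negP [] | ]; first by apply/existsP; exists M.
by rewrite f'; set m := max_forcing_number _; lia.
Qed.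

Lemma minimal_exact : minimal_graph n E -> exists M, perfect_matching E M /\ pairs_exact E M.
Proof.
move=> minimal; have [hpm [maxE _]] := minimal.
have [M pm fmax] := max_forcing_attained hpm.
have cM : #|M| = n by have := card_matching sg pm; lia.
have lk : pairs_linked E M by apply/(forcing_number_pairs sg pm cM n2); rewrite -fmax.
have alt : pairs_alternating E M.
  by apply/(forcing_number_alternating sg pm cT n2); rewrite -fmax.
exists M; split => // ei ej eiM ejM nij.
have [a [b [c [d [eiE ejE bcE daE]]]]] := lk ei ej eiM ejM nij.
have cyc := linked_alt_cycle sg pm eiM ejM nij eiE ejE bcE daE.
exists a, b, c, d; split => //; have /alt_cycle4P [_ cycE _ _] := cyc.
apply/eqP; rewrite eqEsubset; apply/andP; split; last by rewrite !subUset !sub1set.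
apply/subsetP => g gI; apply: contraT => chord; exfalso.
move: (gI); rewrite inE => /andP [gE gV].
have gM : g \notin M.
  apply/negP => gM; have /card_gt0P [x xg] : 0 < #|g| by rewrite (edge_card sg gE).
  have [] := matching_edge_in_pair pm eiM ejM gM xg (subsetP gV x xg) => gEq;
    by move: chord; rewrite gEq ?eiE ?ejE !inE eqxx ?orbT.
have off h : h \in [set [set b; c]; [set d; a]] -> h \in E -> h \in E :\ g.
  move=> hB hE; rewrite !inE hE andbT; apply: contraNneq chord => <-.
  by move: hB; rewrite !inE => /orP [] ->; rewrite ?orbT.
apply: (minimal_chord_free minimal pm alt eiM ejM gE gM gV).
exists [:: a; b; c; d].
apply: (linked_alt_cycle (simple_graphD1 g sg) (perfect_matchingD1 pm gM)) => //.
  by apply: off; rewrite ?inE ?eqxx.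
by apply: off; rewrite ?inE ?eqxx ?orbT.
Qed.

(* A graph with a perfect matching all of whose pairs are exact is minimal:
   after deleting an edge g at u, a matching with f = n-1 would give u at least
   n neighbours, but u had at most n of them before, including the one along g. *)
Lemma exact_minimal M : perfect_matching E M -> pairs_exact E M -> minimal_graph n E.
Proof.
move=> pm ex; have alt : pairs_alternating E M.
  move=> ei ej eiM ejM nij; have [a [b [c [d [cyc _]]]]] := ex ei ej eiM ejM nij.
  by exists [:: a; b; c; d].
have fM := (forcing_number_alternating sg pm cT n2).2 alt.
have cM : #|M| = n by have := card_matching sg pm; lia.
split; first by apply/existsP; exists M.
split.
  apply/eqP; rewrite eqn_leq; apply/andP; split.
    by apply/bigmax_leqP => M' pm'; apply: forcing_number_bound.
  by rewrite -fM; apply: leq_bigmax_cond.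
move=> g gE; right; apply/bigmax_leqP => M' pm'; rewrite leqNgt; apply/negP => big.
have sg' := simple_graphD1 g sg.
have cM' : #|M'| = n by have := card_matching sg' pm'; lia.
have lk' : pairs_linked (E :\ g) M'.
  apply/(forcing_number_pairs sg' pm' cM' n2)/eqP.
  rewrite eqn_leq (forcing_number_bound sg' pm') /=.
  by move: big; set f := forcing_number _ _; lia.
have /card_gt0P [u ug] : 0 < #|g| by rewrite (edge_card sg gE).
have := proper_card (nbhd_delete sg gE ug).
have := nbhd_lower sg' pm' u lk'; have := nbhd_upper sg pm u ex; lia.
Qed.

End Minimality.
End ForcingPairs.

Theorem lemma2p2 (T : finType) (n : nat) (E : {set {set T}}) :
  2 <= n -> #|T| = 2 * n -> simple_graph E -> has_perfect_matching E ->
  (forall M, perfect_matching E M ->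
     forcing_number E M = n.-1 <->
     (forall ei ej, ei \in M -> ej \in M -> ei != ej ->
        has_alt_cycle_in E M (ei :|: ej)))
  /\
  ((exists M, perfect_matching E M /\ forcing_number E M = n.-1) <->
   (exists M, perfect_matching E M /\
      (forall ei ej, ei \in M -> ej \in M -> ei != ej ->
         has_alt_cycle_in E M (ei :|: ej))))
  /\
  (minimal_graph n E <->
   exists M, perfect_matching E M /\
      (forall ei ej, ei \in M -> ej \in M -> ei != ej ->
         is_alt_4cycle E M (ei :|: ej))).
Proof.
move=> n2 cT sg _.
have forcing_char M : perfect_matching E M ->
    forcing_number E M = n.-1 <-> pairs_alternating E M.
  by move=> pm; apply: forcing_number_alternating.
split; first exact: forcing_char.
split.
  by split => -[M [pm H]]; exists M; split => //; apply/(forcing_char M pm).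
split; first exact: minimal_exact.
by case=> M [pm ex]; apply: exact_minimal pm ex.
Qed.
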